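(* Let $X$ be a C*-correspondence of finite rank over $A$ and let $\beta>0$. If $\tau\in\operatorname{Avt}_\beta(A)$ then $c_{\tau,\beta}=\infty$.
   Context: $X$ is a C*-correspondence over $A$ (right Hilbert $A$-module with left action $\phi_X\colon A\to\mathcal{L}(X)$). $X$ has finite rank if there are $x_1,\dots,x_d$ in the unit ball of $X$ with $\sum_{i=1}^d\theta_{x_i,x_i}=1_X$, where $\theta_{\xi,\eta}(\zeta)=\xi\langle\eta,\zeta\rangle$ (a unit decomposition). For a word $\mu=\mu_n\cdots\mu_1$ on $\{1,\dots,d\}$ put $x_\mu=x_{\mu_n}\otimes\cdots\otimes x_{\mu_1}\in X^{\otimes n}$, and $x_\emptyset=1$ (unit of $A$ or of its unitization). $\operatorname{Tr}(A)$ denotes the tracial states of $A$ (extended to the unitization when needed). For $\tau\in\operatorname{Tr}(A)$ and $\beta>0$, $c_{\tau,\beta}:=\sum_{k=0}^\infty e^{-k\beta}\sum_{|\mu|=k}\tau(\langle x_\mu,x_\mu\rangle)$ (the $k=0$ term being $1$), a value in $[1,\infty]$ independent of the unit decomposition. $\operatorname{Avt}_\beta(A)$ is the set of $\tau\in\operatorname{Tr}(A)$ with $\tau(a)=e^{-\beta}\sum_{i=1}^d\tau(\langle x_i,ax_i\rangle)$ for all $a\in A$. *)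

From HB Require Import structures.
From mathcomp Require Import all_boot all_order all_algebra.
From mathcomp Require Import all_classical all_reals all_analysis.
From mathcomp Require Import complex.
Set Implicit Arguments. Unset Strict Implicit. Unset Printing Implicit Defensive.
Import Order.TTheory GRing.Theory Num.Theory.
Local Open Scope ring_scope.

(* C*-algebras (not necessarily unital), over the complex field R[i]. *)
Section CStar.
Variable R : realType.
Local Notation C := (R[i]).

Record is_cstar_algebra (A : lmodType C) (mul : A -> A -> A) (star : A -> A)
    (nrm : A -> R) : Prop := IsCStarAlgebra {
  cs_mulA : forall x y z, mul x (mul y z) = mul (mul x y) z;
  cs_mulDl : forall x y z, mul (x + y) z = mul x z + mul y z;
  cs_mulDr : forall x y z, mul x (y + z) = mul x y + mul x z;
  cs_mulZl : forall (c : C) x y, mul (c *: x) y = c *: mul x y;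
  cs_mulZr : forall (c : C) x y, mul x (c *: y) = c *: mul x y;
  cs_starK : forall x, star (star x) = x;
  cs_starD : forall x y, star (x + y) = star x + star y;
  cs_starZ : forall (c : C) x, star (c *: x) = conjc c *: star x;
  cs_starM : forall x y, star (mul x y) = mul (star y) (star x);
  cs_nrm_eq0 : forall x, nrm x = 0 -> x = 0;
  cs_nrm_ge0 : forall x, 0 <= nrm x;
  cs_nrmD : forall x y, nrm (x + y) <= nrm x + nrm y;
  cs_nrmZ : forall (c : C) x, nrm (c *: x) = Normc.normc c * nrm x;
  cs_nrmM : forall x y, nrm (mul x y) <= nrm x * nrm y;
  cs_nrm_cstar : forall x, nrm (mul (star x) x) = nrm x ^+ 2;
  cs_complete : forall u : nat -> A,
    (forall e : R, 0 < e -> exists N, forall m n, (N <= m)%N -> (N <= n)%N ->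
        nrm (u m - u n) < e) ->
    exists l, forall e : R, 0 < e -> exists N, forall n, (N <= n)%N ->
        nrm (u n - l) < e
}.

Definition cs_positive (A : lmodType C) (mul : A -> A -> A) (star : A -> A)
  (a : A) : Prop := exists b, a = mul (star b) b.

Definition is_tracial_state (A : lmodType C) (mul : A -> A -> A) (star : A -> A)
    (nrm : A -> R) (tau : A -> C) : Prop :=
  [/\ (forall x y, tau (x + y) = tau x + tau y) /\
        (forall (c : C) x, tau (c *: x) = c * tau x),
      (forall b, 0 <= tau (mul (star b) b)),
      (forall a, nrm a <= 1 -> Normc.normc (tau a) <= 1) /\
        (forall e : R, 0 < e -> exists a, nrm a <= 1 /\ 1 - e < Normc.normc (tau a)) &
      (forall a b, tau (mul a b) = tau (mul b a))].

Definition hnorm (A X : lmodType C) (nrm : A -> R) (ip : X -> X -> A) (x : X) : R :=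
  Num.sqrt (nrm (ip x x)).

Record is_cstar_correspondence (A : lmodType C) (mul : A -> A -> A) (star : A -> A)
    (nrm : A -> R) (X : lmodType C) (ract : X -> A -> X) (ip : X -> X -> A)
    (phi : A -> X -> X) : Prop := IsCStarCorrespondence {
  cc_ractDl : forall x y a, ract (x + y) a = ract x a + ract y a;
  cc_ractDr : forall x a b, ract x (a + b) = ract x a + ract x b;
  cc_ractZl : forall (c : C) x a, ract (c *: x) a = c *: ract x a;
  cc_ractZr : forall (c : C) x a, ract x (c *: a) = c *: ract x a;
  cc_ractM : forall x a b, ract (ract x a) b = ract x (mul a b);
  cc_ipD : forall x y z, ip x (y + z) = ip x y + ip x z;
  cc_ipZ : forall (c : C) x y, ip x (c *: y) = c *: ip x y;
  cc_ipR : forall x y a, ip x (ract y a) = mul (ip x y) a;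
  cc_ip_star : forall x y, star (ip x y) = ip y x;
  cc_ip_pos : forall x, cs_positive mul star (ip x x);
  cc_ip_eq0 : forall x, ip x x = 0 -> x = 0;
  cc_complete : forall u : nat -> X,
    (forall e : R, 0 < e -> exists N, forall m n, (N <= m)%N -> (N <= n)%N ->
        hnorm nrm ip (u m - u n) < e) ->
    exists l, forall e : R, 0 < e -> exists N, forall n, (N <= n)%N ->
        hnorm nrm ip (u n - l) < e;
  cc_phi_lin : forall a x y (c : C), phi a (x + c *: y) = phi a x + c *: phi a y;
  cc_phi_ract : forall a x b, phi a (ract x b) = ract (phi a x) b;
  cc_phi_adj : forall a x y, ip (phi a x) y = ip x (phi (star a) y);
  cc_phiD : forall a b x, phi (a + b) x = phi a x + phi b x;
  cc_phiZ : forall (c : C) a x, phi (c *: a) x = c *: phi a x;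
  cc_phiM : forall a b x, phi (mul a b) x = phi a (phi b x)
}.

(* unit decomposition: x_1..x_d in the unit ball with sum_i theta_{x_i,x_i} = 1_X *)
Definition unit_decomposition (A X : lmodType C) (nrm : A -> R)
    (ract : X -> A -> X) (ip : X -> X -> A) (d : nat) (x : 'I_d -> X) : Prop :=
  (forall i, hnorm nrm ip (x i) <= 1) /\
  (forall z : X, \sum_(i < d) ract (x i) (ip (x i) z) = z).

Definition Avt (A X : lmodType C) (mul : A -> A -> A) (star : A -> A)
    (nrm : A -> R) (ip : X -> X -> A) (phi : A -> X -> X)
    (d : nat) (x : 'I_d -> X) (beta : R) (tau : A -> C) : Prop :=
  is_tracial_state mul star nrm tau /\
  forall a : A, tau a = ((expR (- beta))%:C)%C * \sum_(i < d) tau (ip (x i) (phi a (x i))).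

(* <x_mu, x_mu> in A for a nonempty word, computed via the interior tensor   *)
(* product: <x (x) y, x (x) y> = <y, phi(<x,x>) y>.  The word                 *)
(* mu = mu_n ... mu_1 is represented by the list [:: mu_1; mu_2; ...; mu_n], *)
(* and x_mu = x_{mu_n} (x) ... (x) x_{mu_1}.  (Value at the empty word is     *)
(* irrelevant: the k = 0 term of c_{tau,beta} is 1 by convention.)            *)
Fixpoint word_ip (A X : lmodType C) (ip : X -> X -> A) (phi : A -> X -> X)
    (d : nat) (x : 'I_d -> X) (mu : seq 'I_d) : A :=
  match mu with
  | [::] => 0
  | i :: s => if s is [::] then ip (x i) (x i)
              else ip (x i) (phi (word_ip ip phi x s) (x i))
  end.

(* k-th term e^{-k beta} sum_{|mu|=k} tau(<x_mu,x_mu>) (real number; the trace *)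
(* value is real since <x_mu,x_mu> is positive), with k = 0 term equal to 1.   *)
Definition c_term (A X : lmodType C) (ip : X -> X -> A) (phi : A -> X -> X)
    (d : nat) (x : 'I_d -> X) (beta : R) (tau : A -> C) (k : nat) : R :=
  if k is 0 then 1
  else expR (- (k%:R * beta)) *
       complex.Re (\sum_(mu : k.-tuple 'I_d) tau (word_ip ip phi x mu)).

Definition c_const (A X : lmodType C) (ip : X -> X -> A) (phi : A -> X -> X)
    (d : nat) (x : 'I_d -> X) (beta : R) (tau : A -> C) : \bar R :=
  (\sum_(0 <= k <oo) (c_term ip phi x beta tau k)%:E)%E.

End CStar.

From HB Require Import structures.
From mathcomp Require Import all_boot all_order all_algebra.
From mathcomp Require Import all_classical all_reals all_analysis.
From mathcomp Require Import complex lra ring.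
Set Implicit Arguments. Unset Strict Implicit. Unset Printing Implicit Defensive.
Import Order.TTheory GRing.Theory Num.Theory.
Local Open Scope ring_scope.

(** The Avt condition says that [a |-> sum_i tau <x_i, a x_i>] is [e^beta tau].
    Since [<x_(i mu), x_(i mu)> = <x_i, phi(<x_mu, x_mu>) x_i>], summing over the
    first letter multiplies the sum over words of length [k] by [e^beta], so every
    term [k >= 1] of the series [c_(tau,beta)] equals the first one,
    [e^-beta sum_i tau <x_i, x_i>].  That term is positive: otherwise
    Cauchy-Schwarz for the positive form [tau <., .>] kills every
    [tau <x_i, phi(a) x_i>], hence [tau] itself. *)

Lemma quadratic_ge0_linear_coef_eq0 (R : realFieldType) (a f : R) :
  0 <= f -> (forall s, 0 <= a * s + f * s ^+ 2) -> a = 0.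
Proof.
move=> f_ge0 H; pose s := - a / (f + 1).
have f1_neq0 : f + 1 != 0 by rewrite gt_eqF // ltr_wpDl.
have a_eq : a = - (s * (f + 1)) by rewrite /s divfK // opprK.
have : a * s + f * s ^+ 2 = - s ^+ 2 by rewrite {1}a_eq; ring.
move: (H s) => /[swap] -> s2_le0.
by rewrite a_eq (_ : s = 0) ?mul0r ?oppr0 //; nra.
Qed.

Lemma hermitian_form_ge0_eq0 (R : realType) (p q r : R[i]) : 0 <= r ->
  (forall t, 0 <= t^* * q + t * p + t * t^* * r)%C -> p = 0.
Proof.
case: p q r => [a b] [c e] [f g]; rewrite lecE /= => /andP[/eqP g0 f_ge0] H.
have [c_eq e_eq] : c = a /\ e = - b.
  move: (H 1%:C%C) (H 'i%C); rewrite !lecE /= g0.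
  by move=> /andP[/eqP h1 _] /andP[/eqP h2 _]; split; lra.
have /(quadratic_ge0_linear_coef_eq0 f_ge0) a0 :
    forall s, 0 <= (a *+ 2) * s + f * s ^+ 2.
  by move=> s; move: (H s%:C%C); rewrite lecE /= g0 c_eq => /andP[_]; nra.
have /(quadratic_ge0_linear_coef_eq0 f_ge0) b0 :
    forall s, 0 <= - (b *+ 2) * s + f * s ^+ 2.
  by move=> s; move: (H (s *i)%C); rewrite lecE /= g0 e_eq => /andP[_]; nra.
by apply/eqP; rewrite eq_complex /=; apply/andP; split; apply/eqP; lra.
Qed.

Lemma Re_realM (R : realType) (e : R) (z : R[i]) :
  complex.Re (e%:C * z)%C = e * complex.Re z.
Proof. by case: z => a b /=; rewrite mul0r subr0. Qed.

Lemma nneseries_ge_cst_pinfty (R : realType) (u : nat -> R) (m : R) :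
  0 < m -> (forall k, m <= u k) -> (\sum_(0 <= k <oo) (u k)%:E = +oo)%E.
Proof.
move=> m_gt0 u_ge_m.
have partial_ge k : ((k%:R * m)%:E <= \sum_(0 <= i <oo) (u i)%:E)%E.
  apply: le_trans (nneseries_lim_ge (m := 0) k _); last first.
    by move=> n _ _; rewrite lee_fin (le_trans (ltW m_gt0)).
  rewrite sumEFin lee_fin (le_trans _ (ler_sum _ (fun i _ => u_ge_m i))) //.
  by rewrite sumr_const_nat subn0 mulr_natl.
move: partial_ge; case: (\sum_(0 <= i <oo) (u i)%:E)%E => // [r|] H; last first.
  by have := H 0%N.
have := H (Num.truncn (r / m)).+1; rewrite lee_fin -(ler_pdivlMr _ _ m_gt0).
by move/(lt_le_trans (truncnS_gt (r / m))); rewrite ltxx.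
Qed.

Lemma sum_tupleS (V : nmodType) (T : finType) (k : nat)
    (F : k.+1.-tuple T -> V) :
  \sum_(t : k.+1.-tuple T) F t = \sum_(i : T) \sum_(t : k.-tuple T) F [tuple of i :: t].
Proof.
rewrite pair_big /= (reindex (fun p : T * k.-tuple T => [tuple of p.1 :: p.2])) //=.
exists (fun t : k.+1.-tuple T => (thead t, [tuple of behead t])).
  by move=> [i t] _ /=; rewrite theadE; congr pair; apply: val_inj.
by move=> t _; rewrite [RHS]tuple_eta.
Qed.

Lemma sum_tuple0 (V : nmodType) (T : finType) (F : 0.-tuple T -> V) :
  \sum_(t : 0.-tuple T) F t = F [tuple].
Proof. by rewrite (big_pred1 [tuple]) // => t; rewrite /= [t]tuple0; apply/esym/eqP. Qed.

Lemma tracial_state_neq0 (R : realType) (A : lmodType R[i]) (mul : A -> A -> A)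
    (star : A -> A) (nrm : A -> R) (tau : A -> R[i]) :
  is_tracial_state mul star nrm tau -> exists a, tau a != 0.
Proof.
case=> _ _ [_ tau_norm1] _.
have [a [_ tau_a_gt]] := tau_norm1 1 ltr01.
by exists a; apply: contraTneq tau_a_gt => ->; rewrite subrr Normc.normc0 ltxx.
Qed.

Section TracialStateOnCorrespondence.
Variables (R : realType) (A X : lmodType R[i]).
Variables (mul : A -> A -> A) (star : A -> A) (nrm : A -> R).
Variables (ract : X -> A -> X) (ip : X -> X -> A) (phi : A -> X -> X).
Hypothesis HA : is_cstar_algebra mul star nrm.
Hypothesis HX : is_cstar_correspondence mul star nrm ract ip phi.
Variable tau : A -> R[i].
Hypothesis tau_state : is_tracial_state mul star nrm tau.

Lemma ipDl u v w : ip (u + v) w = ip u w + ip v w.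
Proof.
by rewrite -(cc_ip_star HX w) (cc_ipD HX) (cs_starD HA) !(cc_ip_star HX).
Qed.

Lemma ipZl c u w : ip (c *: u) w = (c^*)%C *: ip u w.
Proof. by rewrite -(cc_ip_star HX w) (cc_ipZ HX) (cs_starZ HA) (cc_ip_star HX). Qed.

Lemma tau_ip_ge0 u : 0 <= tau (ip u u).
Proof. by case: tau_state => _ tau_pos _ _; case: (cc_ip_pos HX u) => b ->. Qed.

Lemma tau_ip_eq0 u v : tau (ip u u) = 0 -> tau (ip u v) = 0.
Proof.
case: tau_state => [[tauD tauZ] _ _ _] uu0.
apply: (hermitian_form_ge0_eq0 (q := tau (ip v u)) (tau_ip_ge0 v)) => t.
have := tau_ip_ge0 (u + t *: v).
by rewrite (cc_ipD HX) (cc_ipZ HX) !ipDl !ipZl !(tauD, tauZ) uu0 add0r mulrDr mulrA addrA.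
Qed.

Variables (d : nat) (x : 'I_d -> X) (beta : R).
Hypothesis tau_avt :
  forall a, tau a = (expR (- beta))%:C%C * \sum_(i < d) tau (ip (x i) (phi a (x i))).

Lemma sum_tau_ip_phi a :
  \sum_(i < d) tau (ip (x i) (phi a (x i))) = (expR beta)%:C%C * tau a.
Proof. by rewrite tau_avt mulrA -rmorphM /= -expRD addrN expR0 mul1r. Qed.

Lemma sum_tau_word_ipS n :
  \sum_(mu : n.+2.-tuple 'I_d) tau (word_ip ip phi x mu) =
  (expR beta)%:C%C * \sum_(mu : n.+1.-tuple 'I_d) tau (word_ip ip phi x mu).
Proof.
rewrite sum_tupleS exchange_big mulr_sumr; apply: eq_bigr => -[[|j s] mu_size] _ //.
exact: sum_tau_ip_phi.
Qed.

Lemma c_termS k : c_term ip phi x beta tau k.+1 = c_term ip phi x beta tau 1.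
Proof.
elim: k => // k IH; rewrite -IH /c_term sum_tau_word_ipS Re_realM mulrA -expRD.
by congr (expR _ * _); rewrite -[k.+2%:R]natr1; ring.
Qed.

Lemma c_term1_gt0 : 0 < c_term ip phi x beta tau 1.
Proof.
rewrite /c_term sum_tupleS; under eq_bigr do rewrite sum_tuple0 /=.
rewrite pmulr_rgt0 ?expR_gt0 //.
set S := \sum_(i < d) _.
have S_ge0 : 0 <= S := sumr_ge0 _ (fun i _ => tau_ip_ge0 (x i)).
have S_neq0 : S != 0.
  apply/eqP => /(psumr_eq0P (fun i _ => tau_ip_ge0 (x i))) tau_ii0.
  have [a /eqP] := tracial_state_neq0 tau_state; apply.
  by rewrite tau_avt big1 ?mulr0 // => i _; apply/tau_ip_eq0/tau_ii0.
have : 0 < S by rewrite lt_def S_neq0.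
by rewrite ltcE => /andP[].
Qed.

End TracialStateOnCorrespondence.

Theorem proposition5p4 (R : realType)
    (A : lmodType R[i]) (mul : A -> A -> A) (star : A -> A) (nrm : A -> R)
    (X : lmodType R[i]) (ract : X -> A -> X) (ip : X -> X -> A) (phi : A -> X -> X)
    (HA : is_cstar_algebra mul star nrm)
    (HX : is_cstar_correspondence mul star nrm ract ip phi)
    (d : nat) (x : 'I_d -> X) (Hx : unit_decomposition nrm ract ip x)
    (beta : R) (Hbeta : 0 < beta) (tau : A -> R[i])
    (Htau : Avt mul star nrm ip phi x beta tau) :
  c_const ip phi x beta tau = +oo%E.
Proof.
case: Htau => tau_state tau_avt.
have c1_gt0 := c_term1_gt0 HA HX tau_state tau_avt.
apply: (nneseries_ge_cst_pinfty (m := Num.min 1 (c_term ip phi x beta tau 1))).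
  by rewrite lt_min ltr01 c1_gt0.
case=> [|k]; first by rewrite ge_min [c_term _ _ _ _ _ 0]/c_term lexx.
by rewrite (c_termS tau_avt) ge_min lexx orbT.
Qed.
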